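(* Let $n\ge k\ge 4$ be integers and let $Q_1$ be the unicyclic graph on $k$ vertices consisting of a $4$-cycle $v_1v_2v_3v_4v_1$ together with $k-4$ further vertices, each adjacent (only) to $v_1$. Regard $Q_1$ as a subgraph of $K_n$ and let $\Gamma=(K_n,Q_1^-)$. Then, with $u=n-k$, $$\varphi(\Gamma,\lambda)=(\lambda+1)^{n-5}\Big(\lambda^5+(5-n)\lambda^4+(10-4n)\lambda^3+(12k-6n+4ku-38)\lambda^2+(24k-4n+8ku-91)\lambda+127n-116k-28ku-47\Big).$$
   Context: A signed graph is a pair $(G,\sigma)$ with $\sigma:E(G)\to\{+,-\}$; its adjacency matrix $A$ has $(i,j)$-entry $\sigma(v_iv_j)$ if $v_iv_j\in E(G)$ and $0$ otherwise. For a subgraph $H$ of $K_n$, $(K_n,H^-)$ denotes the signed complete graph on $n$ vertices whose negative edges are exactly the edges of $H$ and all other edges are positive. $\varphi(\Gamma,\lambda)=\det(\lambda I-A(\Gamma))$ is the characteristic polynomial. *)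

From HB Require Import structures.
From mathcomp Require Import all_boot all_order all_algebra.
Set Implicit Arguments. Unset Strict Implicit. Unset Printing Implicit Defensive.
Import Order.TTheory GRing.Theory Num.Theory.
Local Open Scope ring_scope.

(* The graph Q_1 on k vertices is
   placed on the vertices v1 = 0, v2 = 1, v3 = 2, v4 = 3 (the 4-cycle
   v1 v2 v3 v4 v1) and the pendant vertices 4, ..., k-1, each adjacent to v1. *)
Definition Q1_edge (k : nat) (i j : nat) : bool :=
  let a := minn i j in let b := maxn i j in
  [|| (a == 0) && (b == 1), (a == 1) && (b == 2), (a == 2) && (b == 3),
      (a == 0) && (b == 3) | [&& a == 0, 4 <= b & b < k] ]%N.

Definition signed_Kn_adj (n : nat) (H : nat -> nat -> bool) : 'M[int]_n :=
  \matrix_(i < n, j < n)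
    (if i == j then 0 else if H i j then -1 else 1).

From HB Require Import structures.
From mathcomp Require Import all_boot all_order all_algebra.
From mathcomp Require Import ring zify.
Import Order.TTheory GRing.Theory Num.Theory.
Local Open Scope ring_scope.

(* Split the vertices of K_n into five cells: {v1}, {v2, v4}, {v3}, the
   pendant vertices of Q1 and the vertices outside Q1.  The sign of an edge
   depends only on the cells of its ends, so A + I = P B P^T where P is the
   n x 5 cell-indicator matrix and B the 5 x 5 matrix of signs between cells.
   Sylvester's identity c^5 det(c I + U V) = c^n det(c I + V U) with c = X + 1
   then trades phi(Gamma) for the characteristic polynomial of the quotient
   matrix B D - I, D = diag(1, 2, 1, k - 4, n - k) being the cell sizes, and
   that 5 x 5 determinant is expanded explicitly. *)

Lemma det_scalar_add_mulmxC (R : comNzRingType) (c : R) n r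
    (U : 'M[R]_(n, r)) (V : 'M[R]_(r, n)) :
  c ^+ n * \det (c%:M + V *m U) = c ^+ r * \det (c%:M + U *m V).
Proof.
pose P := block_mx 1%:M (- U) V c%:M.
have detP : \det P = \det (c%:M + V *m U).
  have := det_mulmx (block_mx 1%:M 0 (- V) 1%:M) P.
  rewrite det_lblock !det1 mul1r /P mulmx_block.
  rewrite !mul1mx !mul0mx !addr0 mulmx1 addNr mulNmx mulmxN opprK addrC.
  by rewrite det_ublock det1 !mul1r => <-.
have := det_mulmx (block_mx c%:M U 0 1%:M) P.
rewrite det_ublock det1 mulr1 det_scalar /P mulmx_block.
rewrite !mul1mx !mul0mx ?addr0 ?add0r mulmx1 mulmxN mul_scalar_mx mul_mx_scalar addNr.
by rewrite det_lblock det_scalar -/P detP mulrC => <-.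
Qed.

Section BlowUp.
Variables (R : comNzRingType) (n r : nat) (p : 'I_n -> 'I_r).

Definition cell_mx : 'M[R]_(n, r) := \matrix_(i, a) (p i == a)%:R.

Lemma sum_cell_mx (F : 'I_r -> R) (i : 'I_n) :
  \sum_a (p i == a)%:R * F a = F (p i).
Proof.
rewrite (bigD1 (p i)) //= eqxx mul1r big1 ?addr0 // => a /negPf.
by rewrite eq_sym => ->; rewrite mul0r.
Qed.

Lemma cell_mx_mul_tr (B : 'M[R]_r) :
  cell_mx *m B *m cell_mx^T = \matrix_(i, j) B (p i) (p j).
Proof.
apply/matrixP => i j; rewrite !mxE -[RHS](sum_cell_mx _ j).
apply: eq_bigr => b _; rewrite !mxE mulrC; congr (_ * _).
by rewrite -(sum_cell_mx (B^~ b)); apply: eq_bigr => a _; rewrite !mxE.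
Qed.

Lemma mul_tr_cell_mx (B : 'M[R]_r) :
  B *m cell_mx^T *m cell_mx = \matrix_(a, b) (B a b *+ #|[set i | p i == b]|).
Proof.
apply/matrixP => a b; rewrite !mxE cardsE -sum1_card -sumrMnr [RHS]big_mkcond.
apply: eq_bigr => i _; rewrite !mxE.
rewrite (eq_bigr (fun c => (p i == c)%:R * B a c)); last first.
  by move=> c _; rewrite !mxE mulrC.
rewrite sum_cell_mx unfold_in /= -[eqn _ _]/(p i == b).
by case: eqP => [->|]; rewrite ?mulr1 ?mulr0.
Qed.

Lemma char_poly_blowup (B : 'M[R]_r) :
  ('X + 1) ^+ r * char_poly (\matrix_(i, j) B (p i) (p j) - 1%:M) =
  ('X + 1) ^+ n * char_poly (\matrix_(a, b) (B a b *+ #|[set i | p i == b]|) - 1%:M).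
Proof.
have char_poly_mx_sub1 m (M : 'M[R]_m) :
    char_poly_mx (M - 1%:M) = ('X + 1)%:M + - map_mx polyC M.
  by rewrite /char_poly_mx map_mxB map_scalar_mx rmorph1 opprB addrA raddfD.
rewrite /char_poly !char_poly_mx_sub1 -cell_mx_mul_tr -mul_tr_cell_mx.
pose U := map_mx polyC cell_mx; pose V := - map_mx polyC (B *m cell_mx^T).
have -> : - map_mx polyC (cell_mx *m B *m cell_mx^T) = U *m V.
  by rewrite mulmxN -map_mxM mulmxA.
have -> : - map_mx polyC (B *m cell_mx^T *m cell_mx) = V *m U.
  by rewrite mulNmx -map_mxM.
by rewrite det_scalar_add_mulmxC.
Qed.

End BlowUp.

Section Laplace.
Variable R : comNzRingType.

(* Unlike the locked [\sum], a [foldr] over [iota] reduces by [simpl], so the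
   full cofactor expansion of a concrete matrix is obtained in one step. *)
Fixpoint det_laplace n (f : nat -> nat -> R) : R :=
  if n is n'.+1 then
    foldr (fun j s => f 0%N j * (-1) ^+ j * det_laplace n' (fun i l => f i.+1 (bump j l)) + s)
      0 (iota 0 n)
  else 1.

Lemma det_mx_laplace n (f : nat -> nat -> R) :
  \det (\matrix_(i < n, j < n) f i j) = det_laplace n f.
Proof.
elim: n f => [|n IHn] f; first by rewrite det_mx00.
pose F j := f 0%N j * (-1) ^+ j * det_laplace n (fun i l => f i.+1 (bump j l)).
rewrite -[RHS]/(foldr (fun j s => F j + s) 0 (iota 0%N n.+1)).
rewrite (expand_det_row _ ord0) (eq_bigr (fun j : 'I_n.+1 => F j)) => [|j _]; last first.
  rewrite /cofactor /F add0n mulrA !mxE -IHn; congr (_ * _ * \det _).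
  by apply/matrixP => i l; rewrite !mxE.
rewrite -(big_mkord xpredT F) /index_iota subn0.
by elim: (iota 0%N n.+1) => [|j s IHs]; rewrite ?big_nil // big_cons IHs.
Qed.

End Laplace.

Definition Q1_cell_index (k i : nat) : nat :=
  (if i == 0 then 0 else if i == 2 then 2 else if i <= 3 then 1
   else if i < k then 3 else 4)%N.

Definition Q1_cell (k i : nat) : 'I_5 := inord (Q1_cell_index k i).

Lemma Q1_cellE k i : Q1_cell k i = Q1_cell_index k i :> nat.
Proof. by rewrite inordK // /Q1_cell_index; repeat case: ifP. Qed.

Definition Q1_cell_edge (a b : nat) : bool :=
  let x := minn a b in let y := maxn a b in
  [|| (x == 0) && (y == 1), (x == 1) && (y == 2) | (x == 0) && (y == 3)]%N.

Definition Q1_cell_sign : 'M[int]_5 :=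
  \matrix_(a, b) (if Q1_cell_edge a b then -1 else 1).

Lemma Q1_edge_cell k i j : (4 <= k)%N ->
  Q1_edge k i j = Q1_cell_edge (Q1_cell k i) (Q1_cell k j).
Proof.
move=> hk; rewrite !Q1_cellE /Q1_cell_index.
case: i => [|[|[|[|i]]]]; case: j => [|[|[|[|j]]]];
  rewrite /Q1_edge /Q1_cell_edge /=; repeat case: ifP => //=; lia.
Qed.

Lemma signed_Kn_adj_Q1E n k : (4 <= k)%N ->
  signed_Kn_adj n (Q1_edge k) =
  \matrix_(i, j) Q1_cell_sign (Q1_cell k i) (Q1_cell k j) - 1%:M.
Proof.
move=> hk; apply/matrixP => i j; rewrite !mxE Q1_edge_cell //.
case: eqP => [->|_]; last by rewrite subr0.
by rewrite /Q1_cell_edge minnn maxnn; case: (nat_of_ord _) => [|[|[|[|]]]].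
Qed.

Lemma card_Q1_cell n k (b : 'I_5) : (4 <= k <= n)%N ->
  #|[set i : 'I_n | Q1_cell k i == b]| = nth 0 [:: 1; 2; 1; k - 4; n - k]%N b.
Proof.
case/andP=> hk hkn; rewrite cardsE -sum1_card big_mkcond /=.
rewrite -(big_mkord xpredT (fun i => (Q1_cell k i == b : nat))).
under eq_bigr => i _ do rewrite -[_ == _]/(Q1_cell k i == b :> nat) Q1_cellE.
rewrite (@big_cat_nat _ _ _ k) // (@big_cat_nat _ _ _ 4) //.
have -> : (\sum_(4 <= i < k) (Q1_cell_index k i == b) = (k - 4) * (3 == b))%N.
  rewrite -sum_nat_const_nat; apply: eq_big_nat => i /andP[h4 hik].
  by rewrite /Q1_cell_index; repeat case: ifP; lia.
have -> : (\sum_(k <= i < n) (Q1_cell_index k i == b) = (n - k) * (4 == b))%N.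
  rewrite -sum_nat_const_nat; apply: eq_big_nat => i /andP[hki _].
  by rewrite /Q1_cell_index; repeat case: ifP; lia.
rewrite !big_nat_recl // big_geq //.
by case: b => [[|[|[|[|[|b]]]]] hb] //=; lia.
Qed.

Definition Q1_factor (n k : nat) : {poly int} :=
  let u : int := (n - k)%:Z in
  let N : int := n%:Z in
  let K : int := k%:Z in
    ('X ^+ 5 + (5 - N)%:P * 'X ^+ 4 + (10 - 4 * N)%:P * 'X ^+ 3
     + (12 * K - 6 * N + 4 * K * u - 38)%:P * 'X ^+ 2
     + (24 * K - 4 * N + 8 * K * u - 91)%:P * 'X
     + (127 * N - 116 * K - 28 * K * u - 47)%:P).

Lemma char_poly_Q1_quotient n k : (4 <= k <= n)%N ->
  char_poly (\matrix_(a, b) (Q1_cell_sign a b *+ #|[set i : 'I_n | Q1_cell k i == b]|)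
             - 1%:M) = Q1_factor n k.
Proof.
move=> hkn; rewrite /char_poly.
set f := fun a b : nat => ('X *+ (a == b)
  - ((if Q1_cell_edge a b then -1 else 1) *+ nth 0 [:: 1; 2; 1; k - 4; n - k]%N b
     - (a == b)%:R)%:P : {poly int}).
rewrite (_ : char_poly_mx _ = \matrix_(a < 5, b < 5) f a b); last first.
  by apply/matrixP => a b; rewrite !mxE card_Q1_cell.
rewrite det_mx_laplace /= /f /bump /= /Q1_factor.
case/andP: hkn => hk hkn.
have [m km] : exists m, k = (m + 4)%N by exists (k - 4)%N; rewrite subnK.
subst k.
have [u ->] : exists u, n = (m + 4 + u)%N by exists (n - (m + 4))%N; rewrite addnC subnK.
rewrite addnK addKn -!natz.
ring.
Qed.

Theorem lemma3p1 (n k : nat) (hk : (4 <= k)%N) (hkn : (k <= n)%N) :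
  let u : int := (n - k)%:Z in
  let N : int := n%:Z in
  let K : int := k%:Z in
  char_poly (signed_Kn_adj n (Q1_edge k)) * ('X + 1) =
  ('X + 1) ^+ (n - 4) *
    ('X ^+ 5 + (5 - N)%:P * 'X ^+ 4 + (10 - 4 * N)%:P * 'X ^+ 3
     + (12 * K - 6 * N + 4 * K * u - 38)%:P * 'X ^+ 2
     + (24 * K - 4 * N + 8 * K * u - 91)%:P * 'X
     + (127 * N - 116 * K - 28 * K * u - 47)%:P).
Proof.
move=> u N K.
have blowup := @char_poly_blowup _ _ _ (fun i : 'I_n => Q1_cell k i) Q1_cell_sign.
rewrite -signed_Kn_adj_Q1E // char_poly_Q1_quotient ?hk // in blowup.
have X1_neq0 : ('X + 1 : {poly int}) != 0 by rewrite -size_poly_eq0 size_XaddC.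
apply: (mulfI (expf_neq0 4 X1_neq0)).
rewrite [char_poly _ * _]mulrC mulrA -exprSr blowup mulrA -exprD subnKC //.
exact: leq_trans hkn.
Qed.
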